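(* Let $K$ be a field, $n\ge1$, $\vartheta$ any one of the four types (left, right, pre-two-sided, two-sided), and $H=\{A\in M_n(K):\operatorname{Tr}A=0\}$. (i) If $\operatorname{char}K=0$ or $\operatorname{char}K=p>n$, then $H$ is a $\vartheta$-Mathieu subspace of $M_n(K)$ and it is the only $\vartheta$-Mathieu subspace of $M_n(K)$ of codimension one. (ii) If $\operatorname{char}K=p>0$ with $p\le n$, then $M_n(K)$ has no $\vartheta$-Mathieu subspace of codimension one.
   Context: $M_n(K)$ is the algebra of $n\times n$ matrices over $K$. A $K$-subspace $V$ of an algebra $\mathcal A$ is a left (resp. right) Mathieu subspace if whenever $a^m\in V$ for all $m\ge1$, then for every $b\in\mathcal A$, $ba^m\in V$ (resp. $a^mb\in V$) for all sufficiently large $m$; pre-two-sided if both left and right; two-sided if whenever $a^m\in V$ for all $m\ge1$, for all $b,c\in\mathcal A$, $ba^mc\in V$ for all sufficiently large $m$. *)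

From HB Require Import structures.
From mathcomp Require Import all_boot all_order all_algebra.
Set Implicit Arguments. Unset Strict Implicit. Unset Printing Implicit Defensive.
Import GRing.Theory.
Local Open Scope ring_scope.

Inductive mathieu_type := LeftM | RightM | PreTwoSidedM | TwoSidedM.

Section Mathieu.
Variables (K : fieldType) (n : nat).

Definition all_pows_in (V : {vspace 'M[K]_n}) (a : 'M[K]_n) : Prop :=
  forall m : nat, (1 <= m)%N -> a ^+ m \in V.

Definition left_Mathieu (V : {vspace 'M[K]_n}) : Prop :=
  forall a, all_pows_in V a ->
    forall b : 'M[K]_n, exists N : nat, forall m : nat, (N <= m)%N -> b * a ^+ m \in V.

Definition right_Mathieu (V : {vspace 'M[K]_n}) : Prop :=
  forall a, all_pows_in V a ->
    forall b : 'M[K]_n, exists N : nat, forall m : nat, (N <= m)%N -> a ^+ m * b \in V.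

Definition two_sided_Mathieu (V : {vspace 'M[K]_n}) : Prop :=
  forall a, all_pows_in V a ->
    forall b c : 'M[K]_n, exists N : nat, forall m : nat, (N <= m)%N -> b * a ^+ m * c \in V.

Definition is_Mathieu (t : mathieu_type) (V : {vspace 'M[K]_n}) : Prop :=
  match t with
  | LeftM => left_Mathieu V
  | RightM => right_Mathieu V
  | PreTwoSidedM => left_Mathieu V /\ right_Mathieu V
  | TwoSidedM => two_sided_Mathieu V
  end.

Definition codim_one (V : {vspace 'M[K]_n}) : Prop :=
  (\dim V).+1 = \dim (fullv : {vspace 'M[K]_n}).

Definition trace_zero_space : {vspace 'M[K]_n} :=
  lker (linfun (fun A : 'M[K]_n => (\tr A : K^o))).

End Mathieu.

From HB Require Import structures.
From mathcomp Require Import all_boot all_order all_algebra.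
Set Implicit Arguments. Unset Strict Implicit. Unset Printing Implicit Defensive.
Import GRing.Theory.
Local Open Scope ring_scope.

(* If char K is 0 or exceeds n, a matrix a all of whose powers have trace 0
   is nilpotent: the Fitting idempotent of a is a polynomial in a divisible
   by a, so its trace vanishes; but the trace of an idempotent is its rank
   read in K, hence the idempotent is 0.  So H is a two-sided Mathieu
   subspace.
   Conversely, let V have codimension one and let P be square-zero with
   P e = P and e P = 0 for an idempotent e.  If P were not in V, then
   e = v + c P with v in V, and v = e - c P is again idempotent, so a left
   Mathieu V would contain P v = P.  Applied to rank-one matrices x w with
   w x = 0 this puts every e_ij (i <> j) and every e_ii - e_00 in V, whence
   V = H; right Mathieu subspaces are handled symmetrically.
   If p = char K <= n, the idempotent with p ones on the diagonal lies in H,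
   yet multiplying it by e_00 gives trace 1: H, the only candidate, is not
   Mathieu. *)

Definition pchar_gt (K : fieldType) (n : nat) : Prop :=
  forall r : nat, (0 < r <= n)%N -> r%:R != 0 :> K.

Lemma pchar_gt_intro (K : fieldType) (n : nat) :
  ([pchar K] =i pred0) \/ (exists p : nat, p \in [pchar K] /\ (n < p)%N) -> pchar_gt K n.
Proof.
move=> charK r /andP[r_gt0 r_le_n]; case: charK => [/pcharf0P -> | [p [charKp n_lt_p]]].
  by rewrite -lt0n.
rewrite -(dvdn_pcharf charKp); apply: contraTN (leq_ltn_trans r_le_n n_lt_p).
by move/(dvdn_leq r_gt0); rewrite leqNgt.
Qed.

Lemma idem_expr (R : pzSemiRingType) (v : R) (m : nat) :
  v * v = v -> (0 < m)%N -> v ^+ m = v.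
Proof.
move=> vv; case: m => // m _; elim: m => [|m IHm]; first by rewrite expr1.
by rewrite exprS IHm vv.
Qed.

Section IdempotentTrace.
Variable K : fieldType.

Lemma mxtrace_idem (n : nat) (e : 'M[K]_n) : e *m e = e -> \tr e = (\rank e)%:R.
Proof.
move=> ee; have eCR := mulmx_base e.
have [D DC] := row_fullP (col_base_full e).
have [S RS] := row_freeP (row_base_free e).
set C := col_base e in eCR DC *; set R := row_base e in eCR RS *.
clearbody C R.
have RC : R *m C = 1%:M.
  (* C has a left inverse and R a right inverse, and C R is idempotent. *)
  have CR_idem : C *m R *m (C *m R) = C *m R by rewrite eCR.
  have := congr1 (fun X => D *m X *m S) CR_idem.
  by rewrite /= !mulmxA DC mul1mx -!mulmxA RS mulmx1.
by rewrite -[in LHS]eCR mxtrace_mulC RC mxtrace1.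
Qed.

Lemma idem_mxtrace_eq0 (n : nat) (e : 'M[K]_n) :
  pchar_gt K n -> e *m e = e -> \tr e = 0 -> e = 0.
Proof.
move=> charK ee; rewrite mxtrace_idem // => /eqP rank_e0.
apply/eqP; rewrite -mxrank_eq0; apply: contraLR rank_e0; rewrite -lt0n => rank_gt0.
by apply: charK; rewrite rank_gt0 rank_leq_row.
Qed.

End IdempotentTrace.

Lemma mxtrace_pid_mx (K : fieldType) (n r : nat) :
  (r <= n)%N -> \tr (pid_mx r : 'M[K]_n) = r%:R.
Proof. by move=> r_le_n; rewrite mxtrace_idem ?pid_mx_id // rank_pid_mx. Qed.

Section Fitting.
Variables (K : fieldType) (n : nat) (a : 'M[K]_n.+1).

Lemma horner_mx_Xn (k : nat) : horner_mx a 'X^k = a ^+ k.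
Proof. by rewrite rmorphXn /= horner_mx_X. Qed.

(* With char_poly a = r X^m and r(0) <> 0, Bezout gives u X^(m+1) + v r = 1,
   and e = u(a) a^(m+1) is the projection onto the invertible part of a. *)
Lemma Fitting_idempotent : exists (q : {poly K}) (k : nat),
  let e := horner_mx a (q * 'X^k) in [/\ (0 < k)%N, e * e = e & a ^+ k * e = a ^+ k].
Proof.
have [m [r]] := multiplicity_XsubC (char_poly a) 0.
rewrite (negPf (monic_neq0 (char_poly_monic a))) polyC0 subr0 /= => r0 Dchi.
have r_Xk0 : horner_mx a (r * 'X^(m.+1)) = 0.
  by rewrite exprS mulrCA -Dchi rmorphM /= Cayley_Hamilton mulr0.
have : coprimep 'X^(m.+1) r by rewrite coprimep_expl // coprimep_sym coprimepX.
case/Bezout_eq1_coprimepP=> [[u v] /= Bezout_uv].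
exists u, m.+1; set e := horner_mx a _.
have e_f1 : e + horner_mx a (v * r) = 1 by rewrite -rmorphD /= Bezout_uv rmorph1.
have ef0 : e * horner_mx a (v * r) = 0.
  by rewrite -rmorphM /= mulrACA mulrC [_ * r]mulrC rmorphM /= r_Xk0 mul0r.
split=> //.
  by rewrite -[RHS]mulr1 -e_f1 mulrDr ef0 addr0.
have Xk_f0 : a ^+ m.+1 * horner_mx a (v * r) = 0.
  by rewrite -horner_mx_Xn -rmorphM /= mulrCA [_ * r]mulrC rmorphM /= r_Xk0 mulr0.
by rewrite -[X in _ = X]mulr1 -e_f1 mulrDr Xk_f0 addr0.
Qed.

Hypothesis tr_pow0 : forall m : nat, (0 < m)%N -> \tr (a ^+ m) = 0.

Lemma mxtrace_horner_mulXn (q : {poly K}) (j : nat) :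
  (0 < j)%N -> \tr (horner_mx a (q * 'X^j)) = 0.
Proof.
elim/poly_ind: q j => [|q c IHq] j j_gt0; first by rewrite mul0r rmorph0 mxtrace0.
rewrite mulrDl -mulrA -exprS mul_polyC rmorphD /= horner_mxZ mxtraceD IHq //.
by rewrite mxtraceZ horner_mx_Xn tr_pow0 // mulr0 addr0.
Qed.

Lemma nilpotent_of_mxtrace_pow0 : pchar_gt K n.+1 -> exists k : nat, a ^+ k = 0.
Proof.
move=> charK; have [q [k [k_gt0 e_idem Xk_e]]] := Fitting_idempotent.
have e0 : horner_mx a (q * 'X^k) = 0.
  by apply: idem_mxtrace_eq0 charK _ (mxtrace_horner_mulXn q k_gt0); rewrite mulmxE.
by exists k; rewrite -Xk_e e0 mulr0.
Qed.

End Fitting.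

Lemma idem_subZ_square0 (R : pzRingType) (A : algType R) (e P : A) (c : R) :
  e * e = e -> e * P + P * e = P -> P * P = 0 ->
  (e - c *: P) * (e - c *: P) = e - c *: P.
Proof.
move=> ee eP_Pe PP.
rewrite mulrBl !mulrBr -!scalerAl -!scalerAr ee PP !scaler0 subr0.
by rewrite -addrA -opprD -scalerDr eP_Pe.
Qed.

Section MathieuTypes.
Variables (K : fieldType) (n : nat) (V : {vspace 'M[K]_n}).

Lemma two_sided_left_Mathieu : two_sided_Mathieu V -> left_Mathieu V.
Proof.
move=> tsV a a_pows b; have [N HN] := tsV a a_pows b 1.
by exists N => m /HN; rewrite mulr1.
Qed.

Lemma two_sided_right_Mathieu : two_sided_Mathieu V -> right_Mathieu V.
Proof.
move=> tsV a a_pows b; have [N HN] := tsV a a_pows 1 b.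
by exists N => m /HN; rewrite mul1r.
Qed.

Lemma two_sided_is_Mathieu (t : mathieu_type) : two_sided_Mathieu V -> is_Mathieu t V.
Proof.
move=> tsV; have lV := two_sided_left_Mathieu tsV.
by have rV := two_sided_right_Mathieu tsV; case: t.
Qed.

Lemma is_Mathieu_left_or_right (t : mathieu_type) :
  is_Mathieu t V -> left_Mathieu V \/ right_Mathieu V.
Proof.
case: t => /=; [by left | by right | by case; left | ].
by move/two_sided_left_Mathieu; left.
Qed.

Lemma all_pows_in_idem (v : 'M[K]_n) : v \in V -> v * v = v -> all_pows_in V v.
Proof. by move=> Vv vv m m_gt0; rewrite idem_expr. Qed.

Lemma left_Mathieu_mul_idem (v b : 'M[K]_n) :
  left_Mathieu V -> v \in V -> v * v = v -> b * v \in V.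
Proof.
move=> lV Vv vv; have [N HN] := lV v (all_pows_in_idem Vv vv) b.
by have := HN N.+1 (leqnSn N); rewrite idem_expr.
Qed.

Lemma right_Mathieu_idem_mul (v b : 'M[K]_n) :
  right_Mathieu V -> v \in V -> v * v = v -> v * b \in V.
Proof.
move=> rV Vv vv; have [N HN] := rV v (all_pows_in_idem Vv vv) b.
by have := HN N.+1 (leqnSn N); rewrite idem_expr.
Qed.

End MathieuTypes.

Section CodimOne.
Variables (K : fieldType) (n : nat) (V : {vspace 'M[K]_n.+1}).
Hypothesis V_codim1 : codim_one V.

Lemma codim_one_decomp (P A : 'M[K]_n.+1) :
  P \notin V -> exists v c, v \in V /\ A = v + c *: P.
Proof.
move=> PV; have VP_full : (V + <[P]>)%VS = fullv.
  apply/eqP; rewrite eqEdim subvf /= -V_codim1.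
  rewrite (ltn_leqif (dimv_leqif_eq (addvSl V <[P]>))).
  by apply: contraNneq PV => ->; apply: subvP (addvSr V _) _ (memv_line P).
have : A \in (V + <[P]>)%VS by rewrite VP_full memvf.
by case/memv_addP=> v Vv [_ /vlineP[c ->] ->]; exists v, c.
Qed.

Lemma left_Mathieu_corner_mem (e P : 'M[K]_n.+1) : left_Mathieu V ->
  e * e = e -> P * e = P -> e * P = 0 -> P * P = 0 -> P \in V.
Proof.
move=> lV ee Pe eP PP; apply: contraT => PV.
have [v [c [Vv De]]] := codim_one_decomp e PV.
have Dv : v = e - c *: P by rewrite De addrK.
have vv : v * v = v by rewrite Dv idem_subZ_square0 // eP Pe add0r.
have := left_Mathieu_mul_idem P lV Vv vv.
by rewrite Dv mulrBr -scalerAr Pe PP scaler0 subr0 (negPf PV).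
Qed.

Lemma right_Mathieu_corner_mem (e P : 'M[K]_n.+1) : right_Mathieu V ->
  e * e = e -> e * P = P -> P * e = 0 -> P * P = 0 -> P \in V.
Proof.
move=> rV ee eP Pe PP; apply: contraT => PV.
have [v [c [Vv De]]] := codim_one_decomp e PV.
have Dv : v = e - c *: P by rewrite De addrK.
have vv : v * v = v by rewrite Dv idem_subZ_square0 // eP Pe addr0.
have := right_Mathieu_idem_mul P rV Vv vv.
by rewrite Dv mulrBl -scalerAl eP PP scaler0 subr0 (negPf PV).
Qed.

End CodimOne.

Section TraceZero.
Variables (K : fieldType) (n : nat).
Local Notation M := 'M[K]_n.+1.
Local Notation H := (trace_zero_space K n.+1).

Lemma mem_trace_zero (A : M) : (A \in H) = (\tr A == 0).
Proof. by rewrite memv_ker lfunE. Qed.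

Lemma codim_one_trace_zero : codim_one H.
Proof.
rewrite /codim_one /trace_zero_space; set tr := linfun _.
have := limg_ker_dim tr fullv; rewrite capfv => <-.
rewrite -addn1; congr (_ + _)%N; apply/esym/eqP; rewrite eqn_leq.
rewrite -[X in (_ <= X)%N](dimvf (K^o : vectType K)) dimvS ?subvf //=.
rewrite lt0n dimv_eq0; apply: contraTneq isT => tr_img0.
have := memv_img tr (memvf (pid_mx 1 : M)).
by rewrite tr_img0 memv0 lfunE /= mxtrace_pid_mx // oner_eq0.
Qed.

(* y and z only witness that w and x are nonzero. *)
Definition rank_one_nilpotent_mem (V : {vspace M}) : Prop :=
  forall (x y : 'cV[K]_n.+1) (w z : 'rV[K]_n.+1),
    w *m x = 0 -> w *m y = 1%:M -> z *m x = 1%:M -> x *m w \in V.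

Lemma Mathieu_rank_one_nilpotent_mem (t : mathieu_type) (V : {vspace M}) :
  codim_one V -> is_Mathieu t V -> rank_one_nilpotent_mem V.
Proof.
move=> V1 /is_Mathieu_left_or_right[lV | rV] x y w z wx wy zx.
  apply: (left_Mathieu_corner_mem V1 (e := y *m w)); rewrite // -!mulmxE.
  - by rewrite mulmxA -(mulmxA y) wy mulmx1.
  - by rewrite mulmxA -(mulmxA x) wy mulmx1.
  - by rewrite mulmxA -(mulmxA y) wx mulmx0 mul0mx.
  - by rewrite mulmxA -(mulmxA x) wx mulmx0 mul0mx.
apply: (right_Mathieu_corner_mem V1 (e := x *m z)); rewrite // -!mulmxE.
- by rewrite mulmxA -(mulmxA x) zx mulmx1.
- by rewrite mulmxA -(mulmxA x) zx mulmx1.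
- by rewrite mulmxA -(mulmxA x) wx mulmx0 mul0mx.
- by rewrite mulmxA -(mulmxA x) wx mulmx0 mul0mx.
Qed.

Lemma trace_zero_sub_delta (V : {vspace M}) :
  (forall i j : 'I_n.+1, i != j -> delta_mx i j \in V) ->
  (forall i : 'I_n.+1, delta_mx i i - delta_mx 0 0 \in V) -> (H <= V)%VS.
Proof.
move=> offdiagV diagV; apply/subvP => A; rewrite mem_trace_zero => /eqP trA0.
have -> : A = \sum_i (\sum_j A i j *: delta_mx i j - A i i *: delta_mx 0 0).
  by rewrite sumrB -scaler_suml [\sum_i A i i]trA0 scale0r subr0 -matrix_sum_delta.
apply: memv_suml => i _; rewrite (bigD1 i) //= addrAC -scalerBr.
apply: memvD; first exact: memvZ.
by apply: memv_suml => j ji; apply/memvZ/offdiagV; rewrite eq_sym.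
Qed.

Lemma delta_mx11 : delta_mx 0 0 = 1%:M :> 'M[K]_1.
Proof. by rewrite [LHS]mx11_scalar mxE !eqxx. Qed.

Section RankOneNilpotentMem.
Variables (V : {vspace M}) (V_nil : rank_one_nilpotent_mem V).

Lemma rank_one_nilpotent_mem_delta (i j : 'I_n.+1) : i != j -> delta_mx i j \in V.
Proof.
move=> ij; rewrite -(mul_delta_mx (0 : 'I_1)).
apply: (V_nil (y := delta_mx j 0) (z := delta_mx 0 i)).
- by rewrite mul_delta_mx_0 // eq_sym.
- by rewrite mul_delta_mx delta_mx11.
- by rewrite mul_delta_mx delta_mx11.
Qed.

Lemma rank_one_nilpotent_mem_delta_diag (i : 'I_n.+1) :
  delta_mx i i - delta_mx 0 0 \in V.
Proof.
have [-> | i0] := eqVneq i 0; first by rewrite subrr mem0v.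
have i0' : 0 != i by rewrite eq_sym.
have -> : delta_mx i i - delta_mx 0 0 =
    (delta_mx i 0 + delta_mx 0 0 : 'cV[K]_n.+1) *m (delta_mx 0 i - delta_mx 0 0)
    + delta_mx i 0 - delta_mx 0 i.
  rewrite mulmxDl !mulmxBr !mul_delta_mx.
  by rewrite [_ + delta_mx i 0]addrAC subrK addrAC -addrA addKr.
rewrite memvB ?memvD ?rank_one_nilpotent_mem_delta //.
apply: (V_nil (y := delta_mx i 0) (z := delta_mx 0 i)).
- by rewrite mulmxBl !mulmxDr !mul_delta_mx !mul_delta_mx_0 // addr0 add0r subrr.
- by rewrite mulmxBl !mul_delta_mx mul_delta_mx_0 // subr0 delta_mx11.
- by rewrite mulmxDr !mul_delta_mx mul_delta_mx_0 // addr0 delta_mx11.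
Qed.

End RankOneNilpotentMem.

Lemma codim_one_eq_trace_zero (V : {vspace M}) : codim_one V -> (H <= V)%VS -> V = H.
Proof.
move=> V1 HV; apply/esym/eqP; rewrite eqEdim HV /=.
by move: codim_one_trace_zero; rewrite /codim_one -V1 => -[->].
Qed.

Lemma Mathieu_codim_one_eq_trace_zero (t : mathieu_type) (V : {vspace M}) :
  codim_one V -> is_Mathieu t V -> V = H.
Proof.
move=> V1 /(Mathieu_rank_one_nilpotent_mem V1) V_nil.
apply: codim_one_eq_trace_zero V1 (trace_zero_sub_delta _ _).
  exact: rank_one_nilpotent_mem_delta.
exact: rank_one_nilpotent_mem_delta_diag.
Qed.

Lemma trace_zero_two_sided_Mathieu : pchar_gt K n.+1 -> two_sided_Mathieu H.
Proof.
move=> charK a a_pows b c.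
have [N aN0] : exists N, a ^+ N = 0.
  by apply: nilpotent_of_mxtrace_pow0 charK => m /a_pows; rewrite mem_trace_zero => /eqP.
exists N => m /subnKC <-; rewrite exprD aN0 mul0r mulr0 mul0r.
exact: mem0v.
Qed.

Lemma trace_zero_not_Mathieu (t : mathieu_type) (p : nat) :
  p \in [pchar K] -> (p <= n.+1)%N -> ~ is_Mathieu t H.
Proof.
move=> charKp p_le_n; have p_gt0 := prime_gt0 (pcharf_prime charKp).
set a : M := pid_mx p.
have aa : a * a = a by rewrite -mulmxE pid_mx_id.
have Ha : a \in H by rewrite mem_trace_zero mxtrace_pid_mx // (pcharf0 charKp).
have tr_e1 : \tr (pid_mx 1 : M) != 0 by rewrite mxtrace_pid_mx // oner_eq0.
case/is_Mathieu_left_or_right=> [lH | rH].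
  have := left_Mathieu_mul_idem (pid_mx 1) lH Ha aa.
  by rewrite mem_trace_zero -mulmxE mul_pid_mx (minn_idPl p_gt0) minnSS minn0 (negPf tr_e1).
have := right_Mathieu_idem_mul (pid_mx 1) rH Ha aa.
by rewrite mem_trace_zero -mulmxE mul_pid_mx (minn_idPr p_gt0) minnSS minn0 (negPf tr_e1).
Qed.

End TraceZero.

Theorem theorem5p1 (K : fieldType) (n : nat) (hn : (0 < n)%N) (t : mathieu_type) :
  ((([pchar K] =i pred0) \/ (exists p : nat, p \in [pchar K] /\ (n < p)%N)) ->
     is_Mathieu t (trace_zero_space K n) /\ codim_one (trace_zero_space K n) /\
     (forall V : {vspace 'M[K]_n}, codim_one V -> is_Mathieu t V ->
        V = trace_zero_space K n))
  /\
  ((exists p : nat, p \in [pchar K] /\ (p <= n)%N) ->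
     forall V : {vspace 'M[K]_n}, codim_one V -> ~ is_Mathieu t V).
Proof.
case: n hn => // n _; split=> [/pchar_gt_intro charK | [p [charKp p_le_n]] V V1 MV].
  split; first exact/two_sided_is_Mathieu/trace_zero_two_sided_Mathieu.
  split; first exact: codim_one_trace_zero.
  exact: Mathieu_codim_one_eq_trace_zero.
have := MV; rewrite (Mathieu_codim_one_eq_trace_zero V1 MV).
exact: trace_zero_not_Mathieu charKp p_le_n.
Qed.
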